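(* Let $w\in\mathbb{R}^n$ be a strictly positive vector and $\mu>0$, and define $f_i^*=\min\{1,\mu/w_i\}$ for $i\in[n]$. Then for any matrix $A\in\mathbb{R}^{n\times n}$, $$\sup_{f\in\mathbb{R}^n:\ \|f\|_{w,1}\le\mu,\ \|f\|_1\le1}\left\{f^\top Af\right\}\le4\sup_{i,j\in[n]}\left\{f_i^*|A_{ij}|f_j^*\right\}.$$
   Context: $\|f\|_{w,1}=\sum_i w_i|f_i|$ denotes the weighted $\ell_1$-norm and $\|f\|_1=\sum_i|f_i|$. *)

From mathcomp Require Import all_boot all_order all_algebra.
Set Implicit Arguments. Unset Strict Implicit. Unset Printing Implicit Defensive.
Import Order.TTheory GRing.Theory Num.Theory.
Local Open Scope ring_scope.

Definition wl1 (R : realFieldType) n (w f : 'I_n -> R) : R := \sum_(i < n) w i * `|f i|.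
Definition l1 (R : realFieldType) n (f : 'I_n -> R) : R := \sum_(i < n) `|f i|.
Definition qform (R : realFieldType) n (A : 'M[R]_n) (f : 'I_n -> R) : R :=
  \sum_(i < n) \sum_(j < n) f i * A i j * f j.
Definition fstar (R : realFieldType) n (w : 'I_n -> R) (mu : R) (i : 'I_n) : R :=
  Num.min 1 (mu / w i).

From mathcomp Require Import all_boot all_order all_algebra.
From mathcomp Require Import ring lra.
Set Implicit Arguments. Unset Strict Implicit. Unset Printing Implicit Defensive.
Import Order.TTheory GRing.Theory Num.Theory.
Local Open Scope ring_scope.

(* Let M = max_ij f*_i |A_ij| f*_j and rescale f by f*: with g_i = |f_i| / f*_i,
   |f_i A_ij f_j| = g_i (f*_i |A_ij| f*_j) g_j <= M g_i g_j, so f^T A f <= M (sum_i g_i)^2.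
   Since 1 / min(1, c) <= 1 + 1 / c, sum_i g_i <= ||f||_1 + ||f||_{w,1} / mu <= 2. *)

Lemma qform_le_rescaled (R : realFieldType) n (A : 'M[R]_n) (f d : 'I_n -> R)
    (M : R) :
  (forall i, 0 < d i) -> (forall i j, d i * `|A i j| * d j <= M) ->
  qform A f <= M * (\sum_i `|f i| / d i) ^+ 2.
Proof.
move=> d_gt0 dAd_le.
pose g i := `|f i| / d i.
have g_ge0 i : 0 <= g i by rewrite divr_ge0 ?normr_ge0 ?ltW.
have -> : M * (\sum_i g i) ^+ 2 = \sum_i \sum_j g i * M * g j.
  rewrite expr2 mulr_suml mulr_sumr; apply: eq_bigr => i _.
  rewrite !mulr_sumr; apply: eq_bigr => j _; ring.
apply: ler_sum => i _; apply: ler_sum => j _.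
apply: le_trans (ler_norm _) _.
have -> : `|f i * A i j * f j| = g i * (d i * `|A i j| * d j) * g j.
  by rewrite /g !normrM; field; rewrite !gt_eqF.
by apply: ler_wpM2r => //; apply: ler_wpM2l.
Qed.

Lemma div_min1_le (R : realFieldType) (x c : R) :
  0 <= x -> 0 < c -> x / Num.min 1 c <= x + x / c.
Proof.
move=> x_ge0 c_gt0; rewrite minEle; case: ifP => _.
- by rewrite divr1 lerDl divr_ge0 // ltW.
- by rewrite lerDr.
Qed.

Lemma fstar_gt0 (R : realFieldType) n (w : 'I_n -> R) (mu : R) (i : 'I_n) :
  0 < w i -> 0 < mu -> 0 < fstar w mu i.
Proof. by move=> w_gt0 mu_gt0; rewrite /fstar lt_min ltr01 divr_gt0. Qed.

Lemma sum_div_fstar_le (R : realFieldType) n (w : 'I_n -> R) (mu : R)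
    (f : 'I_n -> R) :
  (forall i, 0 < w i) -> 0 < mu ->
  \sum_i `|f i| / fstar w mu i <= l1 f + wl1 w f / mu.
Proof.
move=> w_gt0 mu_gt0; rewrite /l1 /wl1 mulr_suml -big_split /=.
apply: ler_sum => i _.
have c_gt0 : 0 < mu / w i by rewrite divr_gt0.
apply: (@le_trans _ _ (`|f i| + `|f i| / (mu / w i))).
  exact: div_min1_le.
by rewrite invf_div mulrCA mulrA.
Qed.

Theorem lemma4 (R : realFieldType) (n : nat) (w : 'I_n -> R) (mu : R)
  (hw : forall i, 0 < w i) (hmu : 0 < mu) (A : 'M[R]_n) (f : 'I_n -> R) :
  wl1 w f <= mu -> l1 f <= 1 ->
  qform A f <= 4 * \big[Num.max/0]_(i < n) \big[Num.max/0]_(j < n)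
                     (fstar w mu i * `|A i j| * fstar w mu j).
Proof.
move=> hwl hl1.
set M := \big[Num.max/0]_(i < n) _.
set S := \sum_i `|f i| / fstar w mu i.
have M_ge0 : 0 <= M by apply: bigmax_ge_id.
have S_ge0 : 0 <= S.
  by apply: sumr_ge0 => i _; rewrite divr_ge0 ?normr_ge0 ?ltW ?fstar_gt0.
have S_le2 : S <= 2.
  apply: le_trans (sum_div_fstar_le f hw hmu) _.
  have : wl1 w f / mu <= 1 by rewrite ler_pdivrMr ?mul1r.
  lra.
apply: le_trans (@qform_le_rescaled _ _ A f (fstar w mu) M _ _) _.
- by move=> i; apply: fstar_gt0.
- move=> i j; apply: le_trans (le_bigmax _ _ i).
  exact: (le_bigmax _ (fun j => fstar w mu i * `|A i j| * fstar w mu j) j).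
- rewrite -/S mulrC ler_wpM2r // expr2.
  have := ler_pM S_ge0 S_ge0 S_le2 S_le2; lra.
Qed.
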